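(* Let $n\ge1$, $k=\lfloor n/2\rfloor$, and let $(p_j,u_j)$, $0\le j\le n$, be the coordinates of the trajectory $T_n$. Then $$C_n=2\sum_{j=0}^{k-1}\bigl(3-2p_j-p_ju_j\bigr)+p_k^2.$$
   Context: For $n\ge1$ and $\mathbf{x}=(x_1,\dots,x_n)\in(0,\infty)^n$ let $f_n(\mathbf{x})=\sum_{i=1}^n x_i+\sum_{1\le i\le j\le n}\prod_{k=i}^j \frac1{x_k}$, $A_n=\inf_{\mathbf{x}\in(0,\infty)^n} f_n(\mathbf{x})$, and $C_n=3n-A_n$. Let $\Phi$ be the partial map of $\mathbb{R}^2$ defined for $p\ne0$ by $\Phi(p,u)=\bigl(p^2(u+1)-1,\ 1/p\bigr)$. For $n\ge1$, the trajectory $T_n$ is the (existing and unique) finite sequence $(p_j,u_j)$, $j=0,\dots,n$, with $(p_j,u_j)=\Phi(p_{j-1},u_{j-1})$ for $1\le j\le n$, $u_0=0$, $p_n=0$, and $p_j>0$ for $0\le j\le n-1$. *)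

From Stdlib Require Import Reals.
From Coquelicot Require Import Coquelicot.
Open Scope R_scope.

Fixpoint sumR (m : nat) (g : nat -> R) : R :=
  match m with O => 0 | S m' => sumR m' g + g m' end.
Fixpoint prodR (m : nat) (g : nat -> R) : R :=
  match m with O => 1 | S m' => prodR m' g * g m' end.

(* f_n(x) = sum_{i=1}^n x_i + sum_{1<=i<=j<=n} prod_{k=i}^j 1/x_k,
   with x : nat -> R, coordinates x 1, ..., x n (other values unused).
   Outer index i' = i-1 in 0..n-1, inner d = j-i in 0..n-1-i', factor t = k-i. *)
Definition f (n : nat) (x : nat -> R) : R :=
  sumR n (fun i' => x (S i'))
  + sumR n (fun i' => sumR (n - i') (fun d =>
        prodR (S d) (fun t => / x (S i' + t)%nat))).

Definition A_n (n : nat) : R :=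
  real (Glb_Rbar (fun y => exists x : nat -> R,
          (forall i, (1 <= i <= n)%nat -> 0 < x i) /\ y = f n x)).

Definition C_n (n : nat) : R := 3 * INR n - A_n n.

(* Phi(p,u) = (p^2 (u+1) - 1, 1/p), used only for p <> 0 *)
Definition Phi (p u : R) : R * R := (p ^ 2 * (u + 1) - 1, / p).

Definition is_trajectory (n : nat) (p u : nat -> R) : Prop :=
  u 0%nat = 0 /\ p n = 0 /\
  (forall j, (j < n)%nat -> 0 < p j) /\
  (forall j, (1 <= j <= n)%nat -> (p j, u j) = Phi (p (j - 1)%nat) (u (j - 1)%nat)).

(** Put [c_i = u_i (1 + p_i)], so that [c_(j+1) = p_j (1 + u_j)] along the
    trajectory.  The sum of the products [1/(c_a ... c_b)] over the intervals
    [[a, b]] starting at [j+1] is [p_j], and over those ending at [j+1] it is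
    [u_(j+1)].  Hence [c] is a critical point of [f_n] in the coordinates
    [log x_i], in which [f_n] is a positive combination of exponentials of linear
    forms, strictly convex already through its terms [x_i].  So [c] is the unique
    minimiser and [A_n = f_n(c) = sum_j (2 p_j + p_j u_j)].
    Since [Phi] is conjugate to its inverse by the swap [(p, u) |-> (u, p)],
    reversing a trajectory and swapping its coordinates gives a trajectory.  The
    minimiser determines the trajectory, so [u_(n-j) = p_j], and folding the sum
    at its middle yields the formula. *)

From Pilot Require Import Defs.
From Stdlib Require Import Reals Lra Lia.
From Coquelicot Require Import Coquelicot.
Open Scope R_scope.

Lemma sumR_ext m g h : (forall i, (i < m)%nat -> g i = h i) -> sumR m g = sumR m h.
Proof.
  induction m as [|m IH]; intros E; simpl; [reflexivity|].
  rewrite IH by (intros; apply E; lia). rewrite E by lia. reflexivity.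
Qed.

Lemma prodR_ext m g h : (forall i, (i < m)%nat -> g i = h i) -> prodR m g = prodR m h.
Proof.
  induction m as [|m IH]; intros E; simpl; [reflexivity|].
  rewrite IH by (intros; apply E; lia). rewrite E by lia. reflexivity.
Qed.

Lemma sumR_plus m g h : sumR m (fun i => g i + h i) = sumR m g + sumR m h.
Proof. induction m; simpl; lra. Qed.

Lemma sumR_minus m g h : sumR m (fun i => g i - h i) = sumR m g - sumR m h.
Proof. induction m; simpl; lra. Qed.

Lemma sumR_mult_l m k g : sumR m (fun i => k * g i) = k * sumR m g.
Proof. induction m; simpl; lra. Qed.

Lemma sumR_mult_r m k g : sumR m (fun i => g i * k) = sumR m g * k.
Proof. induction m; simpl; lra. Qed.

Lemma sumR_const m k : sumR m (fun _ => k) = INR m * k.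
Proof. induction m as [|m IH]; simpl sumR; [simpl; lra|]. rewrite IH, S_INR; lra. Qed.

Lemma sumR_succ_l m g : sumR (S m) g = g 0%nat + sumR m (fun i => g (S i)).
Proof. induction m as [|m IH]; simpl in *; [lra|]. rewrite IH; lra. Qed.

Lemma prodR_succ_l m g : prodR (S m) g = g 0%nat * prodR m (fun i => g (S i)).
Proof. induction m as [|m IH]; simpl in *; [lra|]. rewrite IH; lra. Qed.

Lemma sumR_add m k g : sumR (m + k) g = sumR m g + sumR k (fun j => g (m + j)%nat).
Proof.
  induction k as [|k IH]; simpl; [rewrite Nat.add_0_r; lra|].
  rewrite Nat.add_succ_r; simpl; rewrite IH; lra.
Qed.

Lemma sumR_rev m g : sumR m g = sumR m (fun i => g (m - 1 - i)%nat).
Proof.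
  induction m as [|m IH]; [reflexivity|].
  rewrite (sumR_succ_l m (fun i => g (S m - 1 - i)%nat)). simpl sumR at 1. rewrite IH.
  replace (S m - 1 - 0)%nat with m by lia.
  rewrite (sumR_ext m (fun i => g (m - 1 - i)%nat) (fun i => g (S m - 1 - S i)%nat))
    by (intros; f_equal; lia).
  lra.
Qed.

Lemma sumR_split_rev m k g : (k <= m)%nat ->
  sumR m g = sumR k g + sumR (m - k) (fun j => g (m - 1 - j)%nat).
Proof.
  intros Hk. replace m with (k + (m - k))%nat at 1 by lia.
  rewrite sumR_add, (sumR_rev (m - k)). f_equal.
  apply sumR_ext; intros; f_equal; lia.
Qed.

Lemma sumR_telescope m g : sumR m (fun i => g (S i) - g i) = g m - g 0%nat.
Proof. induction m; simpl; lra. Qed.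

Lemma sumR_le m g h : (forall i, (i < m)%nat -> g i <= h i) -> sumR m g <= sumR m h.
Proof.
  induction m as [|m IH]; intros E; simpl; [lra|].
  pose proof (E m ltac:(lia)). pose proof (IH ltac:(intros; apply E; lia)). lra.
Qed.

Lemma sumR_nonneg m g : (forall i, (i < m)%nat -> 0 <= g i) -> 0 <= sumR m g.
Proof.
  intros E. replace 0 with (sumR m (fun _ => 0)) by (rewrite sumR_const; lra).
  now apply sumR_le.
Qed.

Lemma sumR_nonneg_eq_0 m g : (forall i, (i < m)%nat -> 0 <= g i) -> sumR m g <= 0 ->
  forall i, (i < m)%nat -> g i = 0.
Proof.
  induction m as [|m IH]; simpl; intros E Hs i Hi; [lia|].
  pose proof (sumR_nonneg m g ltac:(intros; apply E; lia)). pose proof (E m ltac:(lia)).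
  destruct (Nat.eq_dec i m) as [->|]; [lra|].
  apply IH; [intros; apply E; lia | lra | lia].
Qed.

Lemma sumR_triangle_exchange m (F : nat -> nat -> R) :
  sumR m (fun i => sumR (m - i) (fun d => F i (i + d)%nat)) =
  sumR m (fun b => sumR (S b) (fun i => F i b)).
Proof.
  induction m as [|m IH]; [reflexivity|].
  change (sumR (S m) (fun b => sumR (S b) (fun i => F i b)))
    with (sumR m (fun b => sumR (S b) (fun i => F i b)) + sumR (S m) (fun i => F i m)).
  rewrite <- IH.
  rewrite (sumR_ext (S m) _ (fun i => sumR (m - i) (fun d => F i (i + d)%nat) + F i m)).
  2:{ intros i Hi. replace (S m - i)%nat with (S (m - i)) by lia. simpl.
      do 3 f_equal; lia. }
  rewrite sumR_plus. simpl sumR at 1. rewrite Nat.sub_diag. simpl. lra.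
Qed.

Definition recip_prod (x : nat -> R) (a d : nat) : R :=
  prodR (S d) (fun t => / x (a + t)%nat).

Definition tail_sum (x : nat -> R) (a m : nat) : R := sumR m (recip_prod x a).

Definition head_sum (x : nat -> R) (b : nat) : R :=
  sumR (S b) (fun i => recip_prod x (S i) (b - i)).

Lemma f_tail_sum n (x : nat -> R) :
  Defs.f n x = sumR n (fun i => x (S i)) + sumR n (fun i => tail_sum x (S i) (n - i)).
Proof. reflexivity. Qed.

Lemma recip_prod_0 x a : recip_prod x a 0 = / x a.
Proof. unfold recip_prod; simpl. rewrite Nat.add_0_r; lra. Qed.

Lemma recip_prod_succ_l x a d : recip_prod x a (S d) = / x a * recip_prod x (S a) d.
Proof.
  unfold recip_prod. rewrite prodR_succ_l, Nat.add_0_r. f_equal.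
  apply prodR_ext; intros; do 2 f_equal; lia.
Qed.

Lemma recip_prod_succ_r x a d : recip_prod x a (S d) = recip_prod x a d * / x (a + S d)%nat.
Proof. reflexivity. Qed.

Lemma recip_prod_pos x a d :
  (forall t, (t <= d)%nat -> 0 < x (a + t)%nat) -> 0 < recip_prod x a d.
Proof.
  intros Hx. induction d as [|d IH].
  - rewrite recip_prod_0, <- (Nat.add_0_r a). apply Rinv_0_lt_compat, Hx; lia.
  - rewrite recip_prod_succ_r. apply Rmult_lt_0_compat.
    + apply IH; intros; apply Hx; lia.
    + apply Rinv_0_lt_compat, Hx; lia.
Qed.

Lemma tail_sum_succ x a m : tail_sum x a (S m) = (1 + tail_sum x (S a) m) / x a.
Proof.
  unfold tail_sum. rewrite sumR_succ_l, recip_prod_0.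
  rewrite (sumR_ext m _ (fun d => / x a * recip_prod x (S a) d))
    by (intros; apply recip_prod_succ_l).
  rewrite sumR_mult_l. unfold Rdiv. ring.
Qed.

Lemma tail_sum_ext x y a m :
  (forall t, (t < m)%nat -> x (a + t)%nat = y (a + t)%nat) -> tail_sum x a m = tail_sum y a m.
Proof.
  intros E. apply sumR_ext; intros d Hd. apply prodR_ext; intros t Ht.
  rewrite E by lia. reflexivity.
Qed.

Lemma head_sum_0 x : head_sum x 0 = / x 1%nat.
Proof. unfold head_sum; simpl sumR. rewrite recip_prod_0. ring. Qed.

Lemma head_sum_succ x b : head_sum x (S b) = (1 + head_sum x b) / x (S (S b)).
Proof.
  unfold head_sum. change (sumR (S (S b)) ?g) with (sumR (S b) g + g (S b)); cbv beta.
  rewrite (sumR_ext (S b) _ (fun i => recip_prod x (S i) (b - i) * / x (S (S b)))).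
  2:{ intros i Hi. replace (S b - i)%nat with (S (b - i)) by lia.
      rewrite recip_prod_succ_r. do 3 f_equal. lia. }
  rewrite sumR_mult_r, Nat.sub_diag, recip_prod_0. unfold Rdiv. ring.
Qed.

Lemma sumR_recip_prod_exchange x n W :
  sumR n (fun i => sumR (n - i) (fun d => recip_prod x (S i) d * W (S i + d)%nat)) =
  sumR n (fun b => head_sum x b * W (S b)).
Proof.
  transitivity (sumR n (fun i => sumR (n - i)
    (fun d => (fun i b => recip_prod x (S i) (b - i) * W (S b)) i (i + d)%nat))).
  { apply sumR_ext; intros i Hi. apply sumR_ext; intros d Hd. cbv beta.
    do 2 f_equal; lia. }
  rewrite (sumR_triangle_exchange n (fun i b => recip_prod x (S i) (b - i) * W (S b))).
  apply sumR_ext; intros b Hb.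
  unfold head_sum. rewrite sumR_mult_r. reflexivity.
Qed.

Definition exp_gap (w : R) : R := exp w - 1 - w.

Lemma exp_gap_nonneg w : 0 <= exp_gap w.
Proof. unfold exp_gap. pose proof (exp_ineq1_le w). lra. Qed.

Lemma exp_gap_eq_0 w : exp_gap w = 0 -> w = 0.
Proof.
  unfold exp_gap. intros E. destruct (Req_dec w 0) as [|Hw]; [assumption|].
  pose proof (exp_ineq1 w Hw). lra.
Qed.

(* Cumulated logarithmic coordinates of [x] relative to [c]: a product over an interval
   becomes the exponential of a difference. *)
Definition log_ratio_sum (x c : nat -> R) (j : nat) : R :=
  sumR j (fun i => ln (x (S i) / c (S i))).

Section LogCoordinates.

Variables (n : nat) (x c : nat -> R).
Hypothesis x_pos : forall i, (1 <= i <= n)%nat -> 0 < x i.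
Hypothesis c_pos : forall i, (1 <= i <= n)%nat -> 0 < c i.

Local Notation Z := (log_ratio_sum x c).

Lemma ratio_exp i : (i < n)%nat -> x (S i) = c (S i) * exp (Z (S i) - Z i).
Proof.
  intros Hi. unfold log_ratio_sum. simpl sumR.
  replace (_ + ln (x (S i) / c (S i)) - _) with (ln (x (S i) / c (S i))) by ring.
  pose proof (x_pos (S i) ltac:(lia)). pose proof (c_pos (S i) ltac:(lia)).
  rewrite exp_ln by (apply Rdiv_lt_0_compat; lra). field. lra.
Qed.

Lemma recip_prod_exp i d : (i + d < n)%nat ->
  recip_prod x (S i) d = recip_prod c (S i) d * exp (Z i - Z (S i + d)%nat).
Proof.
  induction d as [|d IH]; intros Hd.
  - rewrite !recip_prod_0, Nat.add_0_r, (ratio_exp i) by lia.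
    replace (Z i - Z (S i)) with (- (Z (S i) - Z i)) by ring.
    rewrite exp_Ropp, Rinv_mult. reflexivity.
  - rewrite !recip_prod_succ_r, IH by lia.
    replace (S i + S d)%nat with (S (i + S d)) by lia.
    rewrite (ratio_exp (i + S d)) by lia.
    replace (S i + d)%nat with (i + S d)%nat by lia.
    replace (Z i - Z (S (i + S d)))
      with ((Z i - Z (i + S d)%nat) + - (Z (S (i + S d)) - Z (i + S d)%nat)) by ring.
    rewrite exp_plus, exp_Ropp, Rinv_mult. ring.
Qed.

(* Tangent-line bound [exp w >= 1 + w] applied to every product of reciprocals. *)
Lemma tail_sums_ge :
  sumR n (fun i => tail_sum c (S i) (n - i) * (1 + Z i))
  - sumR n (fun b => head_sum c b * Z (S b))
  <= sumR n (fun i => tail_sum x (S i) (n - i)).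
Proof.
  rewrite <- (sumR_recip_prod_exchange c n Z), <- sumR_minus.
  apply sumR_le; intros i Hi. unfold tail_sum.
  rewrite <- sumR_mult_r, <- sumR_minus.
  apply sumR_le; intros d Hd.
  rewrite recip_prod_exp by lia.
  assert (0 < recip_prod c (S i) d) by (apply recip_prod_pos; intros; apply c_pos; lia).
  pose proof (exp_ineq1_le (Z i - Z (S i + d)%nat)).
  nra.
Qed.

End LogCoordinates.

Definition critical_point (p u : nat -> R) (i : nat) : R := u i * (1 + p i).

Definition min_term (p u : nat -> R) (j : nat) : R := 2 * p j + p j * u j.

Section Trajectory.

Variables (n : nat) (p u : nat -> R).
Hypothesis traj : is_trajectory n p u.

Local Notation c := (critical_point p u).

Lemma traj_p_pos j : (j < n)%nat -> 0 < p j.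
Proof. destruct traj as (_ & _ & H & _). apply H. Qed.

Lemma traj_step j : (j < n)%nat -> p (S j) = p j ^ 2 * (u j + 1) - 1 /\ u (S j) = / p j.
Proof.
  destruct traj as (_ & _ & _ & H). intros Hj.
  specialize (H (S j) ltac:(lia)). rewrite Nat.sub_succ, Nat.sub_0_r in H.
  injection H; auto.
Qed.

Lemma traj_u_pos j : (1 <= j <= n)%nat -> 0 < u j.
Proof.
  intros Hj. destruct j as [|j]; [lia|].
  rewrite (proj2 (traj_step j ltac:(lia))). apply Rinv_0_lt_compat, traj_p_pos; lia.
Qed.

Lemma traj_u_nonneg j : (j <= n)%nat -> 0 <= u j.
Proof.
  intros Hj. destruct j as [|j].
  - destruct traj as (-> & _). lra.
  - apply Rlt_le, traj_u_pos; lia.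
Qed.

Lemma traj_p_nonneg j : (j <= n)%nat -> 0 <= p j.
Proof.
  intros Hj. destruct (Nat.eq_dec j n) as [->|].
  - destruct traj as (_ & -> & _). lra.
  - apply Rlt_le, traj_p_pos; lia.
Qed.

Lemma critical_point_pos i : (1 <= i <= n)%nat -> 0 < c i.
Proof.
  intros Hi. pose proof (traj_u_pos i Hi). pose proof (traj_p_nonneg i ltac:(lia)).
  unfold critical_point. apply Rmult_lt_0_compat; lra.
Qed.

Lemma critical_point_succ i : (i < n)%nat -> c (S i) = p i * (1 + u i).
Proof.
  intros Hi. destruct (traj_step i Hi) as [Ep Eu]. pose proof (traj_p_pos i Hi).
  unfold critical_point. rewrite Ep, Eu. field. lra.
Qed.

Lemma tail_sum_critical_point i : (i < n)%nat -> tail_sum c (S i) (n - i) = p i.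
Proof.
  assert (K : forall m, (m <= n)%nat -> tail_sum c (S (n - m)) m = p (n - m)%nat).
  { induction m as [|m IH]; intros Hm.
    - rewrite Nat.sub_0_r. destruct traj as (_ & -> & _). reflexivity.
    - rewrite tail_sum_succ. replace (S (S (n - S m))) with (S (n - m)) by lia.
      rewrite IH by lia. replace (n - m)%nat with (S (n - S m)) by lia.
      rewrite critical_point_succ by lia.
      destruct (traj_step (n - S m) ltac:(lia)) as [-> _].
      pose proof (traj_p_pos (n - S m) ltac:(lia)).
      pose proof (traj_u_nonneg (n - S m) ltac:(lia)).
      field. lra. }
  intros Hi. specialize (K (n - i)%nat ltac:(lia)).
  replace (n - (n - i))%nat with i in K by lia. exact K.
Qed.

Lemma head_sum_critical_point b : (b < n)%nat -> head_sum c b = u (S b).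
Proof.
  induction b as [|b IH]; intros Hb.
  - rewrite head_sum_0, critical_point_succ by lia.
    rewrite (proj2 (traj_step 0 Hb)). destruct traj as (-> & _). f_equal. ring.
  - rewrite head_sum_succ, IH, critical_point_succ by lia.
    rewrite (proj2 (traj_step (S b) Hb)).
    pose proof (traj_p_pos (S b) Hb). pose proof (traj_u_nonneg (S b) ltac:(lia)).
    field. lra.
Qed.

(* The gradient of [f_n] at [c] in logarithmic coordinates vanishes; the weights
   [p_j u_j] telescope, as [u_0 = p_n = 0]. *)
Lemma critical_point_stationary (Z : nat -> R) :
  sumR n (fun i => c (S i) * (Z (S i) - Z i)) = sumR n (fun i => u (S i) * Z (S i) - p i * Z i).
Proof.
  assert (E : sumR n (fun i => c (S i) * (Z (S i) - Z i) - (u (S i) * Z (S i) - p i * Z i)) =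
              sumR n (fun i => p (S i) * u (S i) * Z (S i) - p i * u i * Z i)).
  { apply sumR_ext; intros i Hi.
    replace (c (S i) * (Z (S i) - Z i)) with (c (S i) * Z (S i) - c (S i) * Z i) by ring.
    rewrite (critical_point_succ i Hi) at 2. unfold critical_point. ring. }
  rewrite sumR_minus, (sumR_telescope n (fun i => p i * u i * Z i)) in E.
  destruct traj as (E0 & En & _). rewrite E0, En in E. lra.
Qed.

Section Gap.

Variable x : nat -> R.
Hypothesis x_pos : forall i, (1 <= i <= n)%nat -> 0 < x i.

Local Notation Z := (log_ratio_sum x c).

Lemma f_critical_point_gap :
  Defs.f n c + sumR n (fun i => c (S i) * exp_gap (Z (S i) - Z i)) <= Defs.f n x.
Proof.
  pose proof (tail_sums_ge n x c x_pos critical_point_pos) as L.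
  rewrite (sumR_ext n (fun i => tail_sum c (S i) (n - i) * (1 + Z i))
             (fun i => p i + p i * Z i)) in L
    by (intros; rewrite tail_sum_critical_point by lia; ring).
  rewrite (sumR_ext n (fun b => head_sum c b * Z (S b)) (fun b => u (S b) * Z (S b))) in L
    by (intros; rewrite head_sum_critical_point by lia; reflexivity).
  rewrite sumR_plus in L.
  rewrite !f_tail_sum.
  rewrite (sumR_ext n (fun i => tail_sum c (S i) (n - i)) p)
    by (intros; apply tail_sum_critical_point; lia).
  rewrite (sumR_ext n (fun i => x (S i)) (fun i => c (S i) * exp (Z (S i) - Z i)))
    by (intros; apply (ratio_exp n x c x_pos critical_point_pos); lia).
  assert (G : sumR n (fun i => c (S i) * exp_gap (Z (S i) - Z i)) =
              sumR n (fun i => c (S i) * exp (Z (S i) - Z i)) - sumR n (fun i => c (S i))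
              - sumR n (fun i => c (S i) * (Z (S i) - Z i))).
  { rewrite <- !sumR_minus. apply sumR_ext; intros. unfold exp_gap. ring. }
  pose proof (critical_point_stationary Z) as St. rewrite sumR_minus in St.
  lra.
Qed.

Lemma f_critical_point_le : Defs.f n c <= Defs.f n x.
Proof.
  pose proof f_critical_point_gap.
  assert (0 <= sumR n (fun i => c (S i) * exp_gap (Z (S i) - Z i))).
  { apply sumR_nonneg; intros i Hi. apply Rmult_le_pos.
    - apply Rlt_le, critical_point_pos; lia.
    - apply exp_gap_nonneg. }
  lra.
Qed.

Lemma f_critical_point_eq : Defs.f n x = Defs.f n c -> forall i, (1 <= i <= n)%nat -> x i = c i.
Proof.
  intros Ef i Hi. destruct i as [|i]; [lia|].
  pose proof f_critical_point_gap as Gap.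
  assert (Zero : c (S i) * exp_gap (Z (S i) - Z i) = 0).
  { apply (sumR_nonneg_eq_0 n (fun i => c (S i) * exp_gap (Z (S i) - Z i))); [|lra|lia].
    intros j Hj. apply Rmult_le_pos.
    - apply Rlt_le, critical_point_pos; lia.
    - apply exp_gap_nonneg. }
  pose proof (critical_point_pos (S i) Hi).
  apply Rmult_integral in Zero as [|Zero]; [lra|].
  rewrite (ratio_exp n x c x_pos critical_point_pos i) by lia.
  rewrite (exp_gap_eq_0 _ Zero), exp_0. ring.
Qed.

End Gap.

Lemma A_n_critical_point : A_n n = Defs.f n c.
Proof.
  unfold A_n. rewrite (is_glb_Rbar_unique _ (Finite (Defs.f n c))); [reflexivity|]. split.
  - intros y (x & Hx & ->). simpl. apply (f_critical_point_le x Hx).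
  - intros b Hb. apply Hb. exists c. split; [exact critical_point_pos | reflexivity].
Qed.

Lemma f_critical_point_value : Defs.f n c = sumR n (min_term p u).
Proof.
  rewrite f_tail_sum.
  rewrite (sumR_ext n (fun i => tail_sum c (S i) (n - i)) p)
    by (intros; apply tail_sum_critical_point; lia).
  rewrite <- sumR_plus. apply sumR_ext; intros i Hi.
  rewrite critical_point_succ by lia. unfold min_term. ring.
Qed.

End Trajectory.

Lemma trajectory_unique n p u p' u' : is_trajectory n p u -> is_trajectory n p' u' ->
  forall j, (j <= n)%nat -> p' j = p j.
Proof.
  intros traj traj' j Hj.
  assert (Ef : Defs.f n (critical_point p' u') = Defs.f n (critical_point p u)).
  { apply Rle_antisym.
    - apply (f_critical_point_le n p' u' traj'), (critical_point_pos n p u traj).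
    - apply (f_critical_point_le n p u traj), (critical_point_pos n p' u' traj'). }
  pose proof (f_critical_point_eq n p u traj _ (critical_point_pos n p' u' traj') Ef) as Ec.
  destruct (Nat.eq_dec j n) as [->|].
  - destruct traj as (_ & -> & _), traj' as (_ & -> & _). reflexivity.
  - rewrite <- (tail_sum_critical_point n p' u' traj'), <- (tail_sum_critical_point n p u traj)
      by lia.
    apply tail_sum_ext; intros t Ht. apply Ec. lia.
Qed.

Lemma trajectory_reverse n p u : is_trajectory n p u ->
  is_trajectory n (fun j => u (n - j)%nat) (fun j => p (n - j)%nat).
Proof.
  intros traj. pose proof traj as (E0 & En & _).
  split; [|split; [|split]]; cbv beta.
  - rewrite Nat.sub_0_r. exact En.
  - rewrite Nat.sub_diag. exact E0.
  - intros j Hj. apply (traj_u_pos n p u traj). lia.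
  - intros j Hj. replace (n - (j - 1))%nat with (S (n - j)) by lia.
    destruct (traj_step n p u traj (n - j) ltac:(lia)) as [-> ->].
    pose proof (traj_p_pos n p u traj (n - j) ltac:(lia)).
    unfold Phi. f_equal; field; lra.
Qed.

Lemma trajectory_symmetry n p u : is_trajectory n p u ->
  forall j, (j <= n)%nat -> u (n - j)%nat = p j.
Proof.
  intros traj. exact (trajectory_unique n p u _ _ traj (trajectory_reverse n p u traj)).
Qed.

Lemma min_term_reflect n p u : is_trajectory n p u -> forall j, (j < n)%nat ->
  min_term p u (n - 1 - j) = min_term p u j + p j * u j - p (S j) * u (S j).
Proof.
  intros traj j Hj. unfold min_term.
  rewrite <- (trajectory_symmetry n p u traj (n - 1 - j)) by lia.
  replace (n - 1 - j)%nat with (n - S j)%nat by lia.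
  rewrite (trajectory_symmetry n p u traj (S j)) by lia.
  replace (n - (n - S j))%nat with (S j) by lia.
  destruct (traj_step n p u traj j Hj) as [Ep Eu]. pose proof (traj_p_pos n p u traj j Hj).
  rewrite Ep, Eu. field. lra.
Qed.

Lemma trajectory_middle_odd n p u k : is_trajectory n p u -> n = (2 * k + 1)%nat -> p k = 1.
Proof.
  intros traj ->. pose proof (traj_p_pos _ p u traj k ltac:(lia)).
  pose proof (trajectory_symmetry _ p u traj k ltac:(lia)) as Sym.
  replace (2 * k + 1 - k)%nat with (S k) in Sym by lia.
  rewrite (proj2 (traj_step _ p u traj k ltac:(lia))) in Sym.
  assert (p k * p k = 1) by (rewrite <- Sym at 1; field; lra).
  nra.
Qed.

Lemma sumR_min_term_fold n p u : is_trajectory n p u ->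
  sumR n (min_term p u) + p (n / 2)%nat ^ 2
  = 2 * sumR (n / 2) (min_term p u) + 3 * (INR n - 2 * INR (n / 2)).
Proof.
  intros traj. set (k := (n / 2)%nat).
  assert (Hk : n = (2 * k)%nat \/ n = (2 * k + 1)%nat).
  { pose proof (Nat.div_mod n 2 ltac:(lia)). pose proof (Nat.mod_upper_bound n 2 ltac:(lia)).
    unfold k. lia. }
  rewrite (sumR_split_rev n k) by lia.
  rewrite (sumR_ext (n - k) _
             (fun j => min_term p u j - (p (S j) * u (S j) - p j * u j)))
    by (intros; rewrite (min_term_reflect n p u traj) by lia; ring).
  rewrite sumR_minus, (sumR_telescope _ (fun j => p j * u j)).
  pose proof traj as (E0 & _). rewrite E0, Rmult_0_r.
  destruct Hk as [Hn|Hn].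
  - replace (n - k)%nat with k by lia.
    rewrite <- (trajectory_symmetry n p u traj k) by lia.
    replace (n - k)%nat with k by lia.
    rewrite Hn, mult_INR. simpl INR. ring.
  - replace (n - k)%nat with (S k) by lia. simpl sumR.
    pose proof (trajectory_middle_odd n p u k traj Hn) as Pk.
    destruct (traj_step n p u traj k ltac:(lia)) as [-> ->].
    rewrite Pk, Hn, plus_INR, mult_INR. unfold min_term. rewrite Pk. simpl INR. field.
Qed.

Theorem lemma8 (n : nat) (p u : nat -> R) :
  (1 <= n)%nat -> is_trajectory n p u ->
  C_n n = 2 * sumR (n / 2)%nat (fun j => 3 - 2 * p j - p j * u j) + (p (n / 2)%nat) ^ 2.
Proof.
  intros _ traj. unfold C_n.
  rewrite (A_n_critical_point n p u traj), (f_critical_point_value n p u traj).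
  rewrite (sumR_ext (n / 2) _ (fun j => 3 - min_term p u j)) by (intros; unfold min_term; ring).
  rewrite sumR_minus, sumR_const.
  pose proof (sumR_min_term_fold n p u traj).
  lra.
Qed.
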